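(* Let $d$ be a prime, $n,N\in\mathbb{N}$, $\omega\in\mathbb{C}$ a primitive $d$-th root of unity, $\zeta(m)=\omega^m$, $A\le\mathbb{C}^\times$ with $\omega\in A$ (and containing a square root of $\omega$ if $d=2$), and $W_1,W_2\in M_n(\mathbb{Z}_d)$ with $W_i-W_i^T$ of full rank. For $i=1,2$ let $\mu_i:\mathcal{G}_d^n(A,\zeta,W_i)\to GL(\mathbb{C}^N)$, $\mu_i(a,p,x)=a\,\omega^p\tau_i(x)$, be injective group homomorphisms, let $\phi:\mathcal{G}_d^n(A,\zeta,W_1)\to\mathcal{G}_d^n(A,\zeta,W_2)$ be a group isomorphism, and suppose $S\in GL(\mathbb{C}^N)$ satisfies $\mu_2(\phi(g))=S\mu_1(g)S^{-1}$ for all $g$. If there is a set $B\subseteq\mathcal{G}_d^n(A,\zeta,W_1)$ such that $\mu_1(B)$ consists of Hermitian matrices spanning $M_N(\mathbb{C})$ and $\mu_2(\phi(g))$ is Hermitian for all $g\in B$, then there is $c\in\mathbb{C}\setminus\{0\}$ such that $cS$ is unitary. The same conclusion holds if ''Hermitian'' is replaced by ''unitary'' in both places.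
   Context: Let $F\subseteq A$ be a fixed set of representatives of $A/\zeta(\mathbb{Z}_d)$ with $1\in F$, and $r:A\to F$, $u:A\to\mathbb{Z}_d$ the maps with $a=r(a)\omega^{u(a)}$. For $W\in M_n(\mathbb{Z}_d)$, $\mathcal{G}_d^n(A,\zeta,W)$ is the set $F\times\mathbb{Z}_d\times\mathbb{Z}_d^n$ with multiplication $(a,p,x)\cdot(b,q,y)=(r(ab),\,u(ab)+p+q+x^TWy,\,x+y)$. *)

(* The complex numbers are modelled as R[i] = complex R for an
   arbitrary R : realType (R plays the role of the real numbers). *)
From mathcomp Require Import all_boot all_algebra complex reals spectral.
Set Implicit Arguments. Unset Strict Implicit. Unset Printing Implicit Defensive.
Import GRing.Theory Num.Theory.
Local Open Scope ring_scope.
Local Open Scope sesquilinear_scope.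

Section Defs.
Variables (C : numClosedFieldType) (d n : nat).

(* Z_d (d prime) is represented by the prime field 'F_d; Z_d^n by column vectors. *)
(* The underlying set of G_d^n(A,zeta,W) lives in the type C * Z_d * Z_d^n; the
   actual carrier is the subset F x Z_d x Z_d^n (see [in_grp]). *)
Definition grp := (C * 'F_d * 'cV['F_d]_n)%type.

Definition zeta (w : C) (m : 'F_d) : C := w ^+ (m : nat).

Definition in_grp (F : C -> Prop) (g : grp) : Prop := F g.1.1.

Definition gmul (r : C -> C) (u : C -> 'F_d) (W : 'M['F_d]_n) (g h : grp) : grp :=
  let '(a, p, x) := g in let '(b, q, y) := h in
  (r (a * b), u (a * b) + p + q + (x^T *m W *m y) ord0 ord0, x + y).

Definition mult_subgroup (A : C -> Prop) : Prop :=
  [/\ A 1, forall a b, A a -> A b -> A (a * b),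
      forall a, A a -> A a^-1 & forall a, A a -> a != 0].

Definition rep_system (A F : C -> Prop) (w : C) : Prop :=
  (forall f, F f -> A f) /\
  (forall a, A a -> exists f, (F f /\ exists m : 'F_d, a = f * zeta w m) /\
      forall f', (F f' /\ exists m : 'F_d, a = f' * zeta w m) -> f' = f).

Definition rep_maps (A F : C -> Prop) (w : C) (r : C -> C) (u : C -> 'F_d) : Prop :=
  forall a, A a -> F (r a) /\ a = r a * zeta w (u a).

Definition inj_hom_GL (N : nat) (F : C -> Prop) (r : C -> C) (u : C -> 'F_d)
    (W : 'M['F_d]_n) (mu : grp -> 'M[C]_N) : Prop :=
  [/\ forall g, in_grp F g -> mu g \in unitmx,
      forall g h, in_grp F g -> in_grp F h -> mu (gmul r u W g h) = mu g *m mu h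
    & forall g h, in_grp F g -> in_grp F h -> mu g = mu h -> g = h].

Definition tau_form (N : nat) (F : C -> Prop) (w : C) (mu : grp -> 'M[C]_N) : Prop :=
  exists tau : 'cV['F_d]_n -> 'M[C]_N,
    (forall x, tau x \in unitmx) /\
    forall a p x, F a -> mu (a, p, x) = (a * w ^+ (p : nat)) *: tau x.

Definition grp_iso (F : C -> Prop) (r : C -> C) (u : C -> 'F_d)
    (W1 W2 : 'M['F_d]_n) (phi : grp -> grp) : Prop :=
  [/\ forall g, in_grp F g -> in_grp F (phi g),
      forall g h, in_grp F g -> in_grp F h ->
        phi (gmul r u W1 g h) = gmul r u W2 (phi g) (phi h),
      forall g h, in_grp F g -> in_grp F h -> phi g = phi h -> g = h
    & forall h, in_grp F h -> exists2 g, in_grp F g & phi g = h].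

End Defs.

Definition spans_all (C : numClosedFieldType) (T : Type) (N : nat)
    (mu : T -> 'M[C]_N) (B : T -> Prop) : Prop :=
  forall M : 'M[C]_N, exists (k : nat) (c : 'I_k -> C) (b : 'I_k -> T),
    (forall i, B (b i)) /\ M = \sum_(i < k) c i *: mu (b i).

From mathcomp Require Import all_boot all_algebra complex reals sesquilinear spectral.
Import GRing.Theory Num.Theory.
Local Open Scope ring_scope.
Local Open Scope sesquilinear_scope.

(* Both alternatives force the Gram matrix S^* S to commute with mu1(b) for
   b in B: in the Hermitian case by taking adjoints in S mu1(b) S^-1, in the
   unitary case by inverting it. As mu1(B) spans M_N(C), S^* S is central,
   hence a scalar l; l > 0 since S is invertible, and l^(-1/2) S is unitary. *)

Section CentralMatrices.
Context {R : pzRingType}.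

Lemma comm_mx_all_scalar {n} {P : 'M[R]_n.+1} :
  (forall M, comm_mx P M) -> P = (P 0 0)%:M.
Proof.
move=> commP; apply/matrixP => i j.
(* entry (i, 0) of P E_j0 = E_j0 P reads P i j = [i == j] P 0 0 *)
have := congr1 (fun X : 'M[R]_n.+1 => X i 0) (commP (delta_mx j 0)).
rewrite !mxE (bigD1 j) //= big1 => [|k /negPf nkj]; last by rewrite mxE nkj mulr0.
rewrite (bigD1 0) //= big1 => [|k /negPf nk0]; last by rewrite mxE nk0 andbF mul0r.
rewrite !mxE !eqxx andbT mulr1 !addr0 => ->.
by case: (i == j); rewrite ?mul1r ?mul0r.
Qed.

End CentralMatrices.

Section Adjoint.
Context {C : numClosedFieldType}.

Lemma trmxC_mul m n p (A : 'M[C]_(m, n)) (B : 'M[C]_(n, p)) :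
  (A *m B)^t* = B^t* *m A^t*.
Proof. by rewrite trmx_mul map_mxM. Qed.

Lemma trmxC_invmx n (S : 'M[C]_n) : S \in unitmx -> S^t* *m (invmx S)^t* = 1%:M.
Proof. by move=> uS; rewrite -trmxC_mul mulVmx // trmx1 map_mx1. Qed.

Lemma hermsymmx_trmxC n (M : 'M[C]_n) : M \is hermsymmx -> M^t* = M.
Proof. by move=> /is_hermitianmxP hM; rewrite [RHS]hM expr0 scale1r. Qed.

Lemma hermsymmx_conj_comm n (S M : 'M[C]_n) :
  S \in unitmx -> M \is hermsymmx -> S *m M *m invmx S \is hermsymmx ->
  comm_mx (S^t* *m S) M.
Proof.
move=> uS /hermsymmx_trmxC hM /hermsymmx_trmxC.
rewrite !trmxC_mul hM => /(congr1 (fun X => S^t* *m X *m S)).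
rewrite !mulmxA trmxC_invmx // mul1mx mulmxKV // => e.
by rewrite /comm_mx -e mulmxA.
Qed.

Lemma unitarymx_conj_comm n (S M : 'M[C]_n) :
  S \in unitmx -> M \is unitarymx -> S *m M *m invmx S \is unitarymx ->
  comm_mx (S^t* *m S) M.
Proof.
move=> uS /unitarymxP hM /unitarymxP hX.
have /(congr1 (fun X => S^t* *m X *m S)) := mulmx1C hX.
rewrite mulmx1 !trmxC_mul !mulmxA trmxC_invmx // mul1mx mulmxKV // => e.
by rewrite /comm_mx -[in RHS]e !mulmxA hM mul1mx.
Qed.

Lemma comm_mx_spans {T : Type} {n} {mu : T -> 'M[C]_n} {B : T -> Prop} {P} :
  spans_all mu B -> (forall b, B b -> comm_mx P (mu b)) -> forall M, comm_mx P M.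
Proof.
move=> spanB commB M; have [k [c [b [Bb ->]]]] := spanB M.
apply: comm_mx_sum => i _.
by rewrite /comm_mx -scalemxAr -scalemxAl commB.
Qed.

Lemma gram_scalar_gt0 {n} {S : 'M[C]_n.+1} {l} :
  S \in unitmx -> S^t* *m S = l%:M -> 0 < l.
Proof.
move=> uS gramS; rewrite lt0r; apply/andP; split; last first.
  have -> : l = (S^t* *m S) 0 0 by rewrite gramS mxE eqxx mulr1n.
  by rewrite mxE sumr_ge0 // => k _; rewrite !mxE mulrC mul_conjC_ge0.
apply/eqP => l0.
have S0 : S^t* = 0.
  by rewrite -[S^t*]mulmx1 -(mulmxV uS) mulmxA gramS l0 mul_scalar_mx scale0r.
by move: uS; rewrite -[S]trmxCK S0 trmx0 map_mx0 unitmxE det0 unitr0.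
Qed.

Lemma gram_scalar_unitarymx n (S : 'M[C]_n) l :
  S \in unitmx -> S^t* *m S = l%:M -> 0 < l -> (sqrtC l)^-1 *: S \is unitarymx.
Proof.
move=> uS gramS l_gt0; apply/unitarymxP.
have gramS' : S *m S^t* = l%:M.
  by rewrite -[S^t*](mulmxK uS) gramS mulmxA scalar_mxC -mulmxA mulmxV ?mulmx1.
have c_real : (sqrtC l)^-1 \is Num.real.
  by rewrite realV ger0_real // sqrtC_ge0 le0r l_gt0 orbT.
rewrite [_^T]linearZ /= map_mxZ -scalemxAl -scalemxAr gramS' !scale_scalar_mx.
rewrite [X in _ * (X * _)](conj_Creal c_real).
by rewrite mulrA -invfM -expr2 sqrtCK mulVf ?lt0r_neq0.
Qed.

End Adjoint.

Theorem proposition25 (R : realType) (d n N : nat) (w : R[i])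
    (A F : R[i] -> Prop) (r : R[i] -> R[i]) (u : R[i] -> 'F_d)
    (W1 W2 : 'M['F_d]_n)
    (mu1 mu2 : grp R[i] d n -> 'M[R[i]]_N)
    (phi : grp R[i] d n -> grp R[i] d n)
    (S : 'M[R[i]]_N) (B : grp R[i] d n -> Prop) :
  prime d ->
  d.-primitive_root w ->
  mult_subgroup A ->
  A w ->
  (d = 2%N -> exists s, A s /\ s ^+ 2 = w) ->
  rep_system d A F w -> F 1 ->
  rep_maps A F w r u ->
  \rank (W1 - W1^T) = n ->
  \rank (W2 - W2^T) = n ->
  inj_hom_GL F r u W1 mu1 -> tau_form F w mu1 ->
  inj_hom_GL F r u W2 mu2 -> tau_form F w mu2 ->
  grp_iso F r u W1 W2 phi ->
  S \in unitmx ->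
  (forall g, in_grp F g -> mu2 (phi g) = S *m mu1 g *m invmx S) ->
  (forall g, B g -> in_grp F g) ->
  spans_all mu1 B ->
  (forall g, B g -> mu1 g \is hermsymmx /\ mu2 (phi g) \is hermsymmx) \/
  (forall g, B g -> mu1 g \is unitarymx /\ mu2 (phi g) \is unitarymx) ->
  exists c : R[i], c != 0 /\ c *: S \is unitarymx.

Proof.
move=> _ _ _ _ _ _ _ _ _ _ _ _ _ _ _ uS mu_conj inB spanB herm_or_unitary.
case: N mu1 mu2 S uS mu_conj spanB herm_or_unitary
  => [|N] mu1 mu2 S uS mu_conj spanB herm_or_unitary.
  by exists 1; split; [exact: oner_neq0 | apply/unitarymxP/matrixP => -[]].
have comm_B g : B g -> comm_mx (S^t* *m S) (mu1 g).
  move=> Bg; have conjS := mu_conj g (inB g Bg).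
  case: herm_or_unitary => /(_ g Bg) [mu1g]; rewrite conjS => mu2g.
  - exact: hermsymmx_conj_comm.
  - exact: unitarymx_conj_comm.
have gramS := comm_mx_all_scalar (comm_mx_spans spanB comm_B).
have l_gt0 := gram_scalar_gt0 uS gramS.
exists (sqrtC ((S^t* *m S) 0 0))^-1; split; last exact: gram_scalar_unitarymx.
by rewrite invr_eq0 sqrtC_eq0 lt0r_neq0.
Qed.
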